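(* Let $K=2$ and let $n_1,n_2$ be nonnegative integers; put $s \coloneqq \min(n_1,n_2)$ and $l \coloneqq \max(n_1,n_2)$. If $l > s > 0$, then \[ h(s+1,\,l) \;\geq\; h(s,\,l+1). \]
   Context: Fix an integer $K\ge 2$. An initial assortment is a vector $\vec n=(n_1,\dots,n_K)$ of nonnegative integers ($n_i$ is the initial stock of goodie type $i$). The following random process is run: the stocks start at $\vec n^{(0)}=\vec n$; at each step $t=1,2,\dots$, as long as at least two coordinates of the current stock vector $\vec n^{(t-1)}$ are nonzero, an index $i$ is chosen uniformly at random (independently of the past) among the indices with $n_i^{(t-1)}>0$, and $\vec n^{(t)}=\vec n^{(t-1)}-\vec e_i$, where $\vec e_i$ is the $i$-th standard unit vector. The process stops at the first time $T$ at which at most one coordinate of $\vec n^{(T)}$ is nonzero. Define $h(\vec n)=\mathbb{E}[T]$ (the expected number of ''happy'' attendees). Equivalently, with $\operatorname{support}(\vec n)=\{i : n_i\neq 0\}$: $h(\vec n)=0$ if $|\operatorname{support}(\vec n)|\le 1$, and otherwise $h(\vec n)=1+\frac{1}{|\operatorname{support}(\vec n)|}\sum_{i\in\operatorname{support}(\vec n)} h(\vec n-\vec e_i)$. *)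

From mathcomp Require Import all_boot all_order all_algebra.
Set Implicit Arguments. Unset Strict Implicit. Unset Printing Implicit Defensive.
Import Order.TTheory GRing.Theory Num.Theory.
Local Open Scope ring_scope.

(* An assortment of K goodie types: a vector of stocks. *)
Definition assortment (K : nat) := {ffun 'I_K -> nat}.

Definition support K (n : assortment K) : {set 'I_K} := [set i | n i != 0%N].

Definition dec K (n : assortment K) (i : 'I_K) : assortment K :=
  [ffun j => if j == i then (n j).-1 else n j].

(* Fuel-based evaluation of the recursion
   h(n) = 0 if |support n| <= 1,
   h(n) = 1 + 1/|support n| * sum_{i in support n} h(n - e_i) otherwise.
   The fuel decreases along with the total stock, so fuel = sum of stocks
   suffices. *)
Fixpoint h_fuel K (fuel : nat) (n : assortment K) : rat :=
  match fuel with
  | 0%N => 0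
  | f.+1 =>
      if (#|support n| <= 1)%N then 0
      else 1 + #|support n|%:R^-1 * \sum_(i in support n) h_fuel f (dec n i)
  end.

Definition h K (n : assortment K) : rat := h_fuel (\sum_(i < K) n i)%N n.

Definition asst2 (a b : nat) : assortment 2 :=
  [ffun i : 'I_2 => if i == ord0 then a else b].

From Pilot Require Import Defs.
From mathcomp Require Import all_boot all_order all_algebra.
From mathcomp Require Import zify.
Import Order.TTheory GRing.Theory Num.Theory.
Local Open Scope ring_scope.

(* For two types, h2 a b := h(a, b) satisfies h2 0 b = h2 a 0 = 0 and
   h2 (a+1) (b+1) = 1 + (h2 a (b+1) + h2 (a+1) b) / 2, hence is symmetric and
   nonnegative.  Moving one unit from the smaller stock a to the larger stock b
   cannot increase h2: by induction on a + b, both sides unfold by the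
   recurrence and their terms compare pairwise by the induction hypothesis,
   except on the diagonal a = b, where h2 a (a+1) = h2 (a+1) a by symmetry. *)

Definition h2 (a b : nat) : rat := h (asst2 a b).

Lemma dec_asst2_0 (a b : nat) : dec (asst2 a b) ord0 = asst2 a.-1 b.
Proof. by apply/ffunP => -[[|[|i]] ?]; rewrite !ffunE. Qed.

Lemma dec_asst2_1 (a b : nat) : dec (asst2 a b) (lift ord0 ord0) = asst2 a b.-1.
Proof. by apply/ffunP => -[[|[|i]] ?]; rewrite !ffunE. Qed.

Lemma card_support_asst2 (a b : nat) :
  #|Defs.support (asst2 a b)| = ((a != 0%N) + (b != 0%N))%N.
Proof.
rewrite -sum1_card big_mkcond /= !big_ord_recl big_ord0 /= !inE !ffunE /=.
by case: a; case: b.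
Qed.

Lemma h_fuel_asst2S (f a b : nat) : h_fuel f.+1 (asst2 a b) =
  if (a == 0%N) || (b == 0%N) then 0
  else 1 + 2^-1 * (h_fuel f (asst2 a.-1 b) + h_fuel f (asst2 a b.-1)).
Proof.
rewrite /= card_support_asst2.
case: a => [|a]; case: b => [|b] //=.
rewrite big_mkcond /= !big_ord_recl big_ord0 /= !inE !ffunE /= addr0.
by rewrite dec_asst2_0 dec_asst2_1.
Qed.

Lemma h_fuel_asst2_fuel_irrelevant (f g a b : nat) :
  (a + b <= f)%N -> (a + b <= g)%N -> h_fuel f (asst2 a b) = h_fuel g (asst2 a b).
Proof.
elim: f g a b => [|f IHf] [|g] a b; rewrite ?leqn0 ?addn_eq0.
- by [].
- by case/andP=> /eqP-> /eqP-> _; rewrite h_fuel_asst2S.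
- by move=> _ /andP[/eqP-> /eqP->]; rewrite h_fuel_asst2S.
rewrite !h_fuel_asst2S; case: a => [|a]; case: b => [|b] //= Hf Hg.
by congr (_ + _ * (_ + _)); apply: IHf; lia.
Qed.

Lemma h2E (a b : nat) : h2 a b = h_fuel (a + b) (asst2 a b).
Proof. by rewrite /h2 /h big_ord_recl big_ord1 !ffunE. Qed.

Lemma h2_0l (b : nat) : h2 0 b = 0.
Proof. by rewrite h2E; case: b => [|b] //; rewrite h_fuel_asst2S. Qed.

Lemma h2_0r (a : nat) : h2 a 0 = 0.
Proof. by rewrite h2E addn0; case: a => [|a] //; rewrite h_fuel_asst2S orbT. Qed.

Lemma h2SS (a b : nat) : h2 a.+1 b.+1 = 1 + 2^-1 * (h2 a b.+1 + h2 a.+1 b).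
Proof.
rewrite h2E addSn h_fuel_asst2S /= (h2E a) (h2E a.+1).
by congr (_ + _ * (_ + _)); apply: h_fuel_asst2_fuel_irrelevant; lia.
Qed.

Lemma h2C (a b : nat) : h2 a b = h2 b a.
Proof.
move: {2}(a + b)%N (leqnn (a + b)) => n.
elim: n a b => [|n IH] [|a] [|b] //= Hab; rewrite ?h2_0l ?h2_0r //.
rewrite !h2SS [h2 b _ + _]addrC.
by congr (_ + _ * (_ + _)); apply: IH; lia.
Qed.

Lemma h2_ge0 (a b : nat) : 0 <= h2 a b.
Proof.
move: {2}(a + b)%N (leqnn (a + b)) => n.
elim: n a b => [|n IH] [|a] [|b] //= Hab; rewrite ?h2_0l ?h2_0r //.
rewrite h2SS addr_ge0 // mulr_ge0 ?invr_ge0 ?ler0n // addr_ge0 //; apply: IH; lia.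
Qed.

Lemma h2_shift_to_larger (a b : nat) : (a <= b)%N -> h2 a b.+1 <= h2 a.+1 b.
Proof.
move: {2}(a + b)%N (leqnn (a + b)) => n.
elim: n a b => [|n IH] a b Hn Hab.
  by move: Hn; rewrite leqn0 addn_eq0 => /andP[/eqP-> /eqP->]; rewrite h2_0l h2_0r.
case: (eqVneq a b) => [<-|Hne]; first by rewrite h2C.
case: a Hn Hab Hne => [|a] Hn Hab Hne; first by rewrite h2_0l h2_ge0.
case: b Hn Hab Hne => [|b] // Hn Hab Hne.
rewrite (h2SS a b.+1) (h2SS a.+1 b) lerD2l ler_pM2l ?invr_gt0 ?ltr0n //.
rewrite [X in _ <= X]addrC lerD2r.
by apply: (le_trans (y := h2 a.+1 b.+1)); apply: IH; lia.
Qed.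

Theorem lemma1 (n1 n2 : nat) :
  let s := minn n1 n2 in
  let l := maxn n1 n2 in
  (s < l)%N -> (0 < s)%N ->
  h (asst2 s l.+1) <= h (asst2 s.+1 l).
Proof.
move=> s l lt_sl _.
exact: h2_shift_to_larger (ltnW lt_sl).
Qed.
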